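(* The support of the invariant probability $\mu$ of the kernel $M$ is the whole segment $[0,1/2]$.
   Context: $M$ is the Markov kernel $M(x,\cdot)=\frac16\sum_{i=1}^6\delta_{z_i(x)}$ on $[0,1/2]$, where for $x\in[0,1/2]$: $z_1(x)=\frac{3x}{2+2x}$; $z_2(x)=\frac{3x}{2-x}$ if $x<2/7$ and $\frac{2-4x}{2-x}$ if $x\ge2/7$; $z_3(x)=\frac{1+x}{3-3x}$ if $x<1/5$ and $\frac{2-4x}{3-3x}$ if $x\ge1/5$; $z_4(x)=\frac{1+x}{4-2x}$; $z_5(x)=\frac{1-2x}{4-2x}$; $z_6(x)=\frac{1-2x}{3}$. $M$ has a unique invariant probability measure, denoted $\mu$. *)

From HB Require Import structures.
From mathcomp Require Import all_boot all_order all_algebra.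
From mathcomp Require Import all_classical all_reals all_analysis.
Set Implicit Arguments. Unset Strict Implicit. Unset Printing Implicit Defensive.
Import Order.TTheory GRing.Theory Num.Theory.
Import numFieldNormedType.Exports.
Local Open Scope classical_set_scope.
Local Open Scope ring_scope.

Section Kernel.
Variable R : realType.

(* The six maps z_1..z_6 on [0,1/2] (formulas taken verbatim; they are only
   ever used for x in [0,1/2]). *)
Definition z1 (x : R) : R := (3 * x) / (2 + 2 * x).
Definition z2 (x : R) : R :=
  if x < 2 / 7 then (3 * x) / (2 - x) else (2 - 4 * x) / (2 - x).
Definition z3 (x : R) : R :=
  if x < 1 / 5 then (1 + x) / (3 - 3 * x) else (2 - 4 * x) / (3 - 3 * x).
Definition z4 (x : R) : R := (1 + x) / (4 - 2 * x).
Definition z5 (x : R) : R := (1 - 2 * x) / (4 - 2 * x).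
Definition z6 (x : R) : R := (1 - 2 * x) / 3.

Definition Mker (x : R) (A : set R) : \bar R :=
  ((6%:R^-1)%:E * (\d_(z1 x) A + \d_(z2 x) A + \d_(z3 x) A
                 + \d_(z4 x) A + \d_(z5 x) A + \d_(z6 x) A))%E.

Definition M_invariant (mu : probability R R) : Prop :=
  forall A : set R, measurable A ->
    mu A = (\int[mu]_(x in `[0%R, 2^-1%R]) Mker x A)%E.

Definition msupport (mu : probability R R) : set R :=
  [set x | forall e : R, 0 < e -> (0 < mu (ball x e))%E].
End Kernel.

From HB Require Import structures.
From mathcomp Require Import all_boot all_order all_algebra.
From mathcomp Require Import all_classical all_reals all_analysis.
From mathcomp Require Import ring lra.
Set Implicit Arguments. Unset Strict Implicit. Unset Printing Implicit Defensive.
Import Order.TTheory GRing.Theory Num.Theory.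
Import numFieldNormedType.Exports.
Local Open Scope classical_set_scope.
Local Open Scope ring_scope.

(* The branches [z4] and [z5] of the kernel are [2/3]-Lipschitz on [0, 1/2]
   and their images cover [0, 1/2].  Invariance gives
   [mu B >= 1/6 * mu (z_i^-1 B)], so a ball of radius [r] around [y'] with
   positive mass yields a ball of radius [2r/3] of positive mass around
   [z_i y'].  Starting from [mu [0, 1/2] = 1], every ball of radius
   [(2/3)^n] centred in [0, 1/2] has positive mass.  Conversely [0, 1/2] is
   closed and carries all the mass, so the support lies inside it. *)

Section integral_lower_bound.
Local Open Scope ereal_scope.
Context d (T : measurableType d) (R : realType) (mu : {measure set T -> \bar R}).
Import HBNNSimple.

(* No measurability of [f] is needed: the integral of a nonnegative function
   is a supremum over the simple functions below it. *)
Lemma ge0_integral_ge_measure (D A : set T) (f : T -> \bar R) (r : R) :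
  measurable D -> measurable A -> (0 <= r)%R ->
  (forall x, D x -> 0 <= f x) -> (forall x, D x -> A x -> r%:E <= f x) ->
  r%:E * mu (A `&` D) <= \int[mu]_(x in D) f x.
Proof.
move=> mD mA r0 f0 fr; have mAD : measurable (A `&` D) by exact: measurableI.
rewrite ge0_integralE // -(sintegral_indic mu (A `&` D)).
rewrite (_ : \1_(A `&` D) = indic_nnsfun R mAD :> (T -> R)) // -sintegralrM.
apply: ereal_sup_ubound; exists (scale_nnsfun (indic_nnsfun R mAD) r0) => //= x.
rewrite (_ : measurable_realfun.mindic _ _ _ = \1_(A `&` D) x) // indicE /patch.
have [[Ax Dx]|ADx] := pselect ((A `&` D) x).
- by rewrite mem_set //= mulr1 mem_set //; exact: fr.
- by rewrite memNset //= mulr0; case: ifPn => // /set_mem; exact: f0.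
Qed.

End integral_lower_bound.

Section probability_full.
Local Open Scope ereal_scope.
Context d (T : measurableType d) (R : realType) (P : probability T R).
Variable D : set T.
Hypotheses (mD : measurable D) (PD : P D = 1).

Lemma probability_setC_full : P (~` D) = 0.
Proof. by rewrite probability_setC // PD subee. Qed.

Lemma probability_setIr_full (A : set T) : measurable A -> P A = P (A `&` D).
Proof.
move=> mA; rewrite (measureDI P mA mD) -[RHS]add0e; congr (_ + _).
apply: (subset_measure0 (measurableD mA mD) (measurableC mD)) probability_setC_full.
by move=> t [].
Qed.

End probability_full.

Lemma msupport_sub_closed (R : realType) (mu : probability R R) (D : set R) :
  closed D -> measurable D -> mu D = 1%E -> msupport mu `<=` D.
Proof.
move=> cD mD muD x xsupp; apply: contrapT => Dx.
have /nbhs_ballP[e /= e0 eD] : nbhs x (~` D) by exact: (closed_openC cD).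
suff : mu (ball x e) = 0%E by have := xsupp e e0; rewrite lt_def => /andP[/eqP].
exact: (subset_measure0 (measurable_realfun.measurable_ball x e)
  (measurableC mD) eD (probability_setC_full mD muD)).
Qed.

Section kernel.
Variable R : realType.
Implicit Types x y : R.

Lemma normr_six_div_le (t p : R) : 9 <= p -> `|6 * t / p| <= 2/3 * `|t|.
Proof.
move=> p9; have p0 : 0 < p by lra.
rewrite normrM normrM normfV (gtr0_norm p0) ger0_norm // ler_pdivrMr //.
have := normr_ge0 t; nra.
Qed.

(* [z4] and [z5] have derivatives [6 / (4 - 2x)^2] and [-6 / (4 - 2x)^2],
   of modulus at most [2/3] on [0, 1/2]. *)
Lemma z4_contraction x y : 0 <= x <= 2^-1 -> 0 <= y <= 2^-1 ->
  `|z4 x - z4 y| <= 2/3 * `|x - y|.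
Proof.
move=> /andP[x0 x1] /andP[y0 y1].
have -> : z4 x - z4 y = 6 * (x - y) / ((4 - 2 * x) * (4 - 2 * y)).
  by rewrite /z4; field; apply/andP; split; apply/eqP; lra.
by apply: normr_six_div_le; nra.
Qed.

Lemma z5_contraction x y : 0 <= x <= 2^-1 -> 0 <= y <= 2^-1 ->
  `|z5 x - z5 y| <= 2/3 * `|x - y|.
Proof.
move=> /andP[x0 x1] /andP[y0 y1]; rewrite [`|x - y|]distrC.
have -> : z5 x - z5 y = 6 * (y - x) / ((4 - 2 * x) * (4 - 2 * y)).
  by rewrite /z5; field; apply/andP; split; apply/eqP; lra.
by apply: normr_six_div_le; nra.
Qed.

(* [z5] maps [0, 1/2] onto [0, 1/4] and [z4] maps it onto [1/4, 1/2]. *)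
Lemma z4_z5_cover y : 0 <= y <= 2^-1 ->
  exists2 y', 0 <= y' <= 2^-1 & z4 y' = y \/ z5 y' = y.
Proof.
move=> /andP[y0 y1]; have [y4|y4] := lerP y 4^-1.
- have d0 : 0 < 2 * (1 - y) by lra.
  exists ((1 - 4 * y) / (2 * (1 - y))).
    by rewrite divr_ge0 1?ler_pdivrMr //=; lra.
  by right; rewrite /z5; field; apply/andP; split; apply/eqP; lra.
- have d0 : 0 < 1 + 2 * y by lra.
  exists ((4 * y - 1) / (1 + 2 * y)).
    by rewrite divr_ge0 1?ler_pdivrMr //=; lra.
  by left; rewrite /z4; field; apply/andP; split; apply/eqP; lra.
Qed.

Lemma Mker_ge0 x (B : set R) : (0 <= Mker x B)%E.
Proof. by rewrite /Mker mule_ge0 // !adde_ge0. Qed.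

Lemma Mker_ge_z4_z5 x (B : set R) :
  z4 x \in B \/ z5 x \in B -> ((6%:R^-1)%:E <= Mker x B)%E.
Proof.
rewrite /Mker !diracE -!EFinD -EFinM lee_fin.
by case=> ->; do 5 case: (_ \in B); rewrite /=; lra.
Qed.

End kernel.

Section invariant_measure.
Variables (R : realType) (mu : probability R R).
Local Notation I := (`[0%R, 2^-1%R]%classic : set R).
Hypotheses (muI : mu I = 1%E) (mu_inv : M_invariant mu).
Let mball := @measurable_realfun.measurable_ball R.

Lemma measure_ball_contract (y y' r : R) : 0 <= y' <= 2^-1 ->
  z4 y' = y \/ z5 y' = y ->
  ((6%:R^-1)%:E * mu (ball y' r) <= mu (ball y (2/3 * r)))%E.
Proof.
move=> y'I hy'; have mI : measurable I by exact: measurable_itv.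
rewrite (probability_setIr_full mI muI (mball _ _)) (mu_inv (mball _ _)).
apply: ge0_integral_ge_measure => // [x _|x]; first exact: Mker_ge0.
rewrite /= in_itv /ball /= => xI xy'.
have lt_r : 2/3 * `|x - y'| < 2/3 * r by rewrite distrC ltr_pM2l //; lra.
apply: Mker_ge_z4_z5; rewrite !inE /ball /=.
case: hy' => <-; [left|right]; rewrite distrC.
- exact: le_lt_trans (z4_contraction xI y'I) lt_r.
- exact: le_lt_trans (z5_contraction xI y'I) lt_r.
Qed.

Lemma measure_ball_gt0 n (y : R) : 0 <= y <= 2^-1 ->
  (0 < mu (ball y ((2/3) ^+ n)))%E.
Proof.
elim: n y => [|n IHn] y yI.
- rewrite expr0; apply: (@lt_le_trans _ _ (mu I)); first by rewrite muI.
  apply: le_measure; rewrite ?inE; [exact: measurable_itv | exact: mball |].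
  move=> t; rewrite /= in_itv /ball /= ltr_norml => /andP[t0 t1].
  by case/andP: yI => y0 y1; apply/andP; split; lra.
- have [y' y'I hy'] := z4_z5_cover yI.
  rewrite exprS; apply: lt_le_trans (measure_ball_contract _ y'I hy').
  by rewrite mule_gt0 // ?lte_fin ?invr_gt0 // IHn.
Qed.

Lemma itv_sub_msupport : I `<=` msupport mu.
Proof.
move=> x /= xI e e0; rewrite in_itv /= in xI.
have q1 : `|2/3 : R| < 1 by rewrite ger0_norm; lra.
have /cvgr0_norm_lt/(_ e e0)[N _ /(_ N (leqnn N)) Ne] := cvg_expr q1.
apply: lt_le_trans (measure_ball_gt0 N xI) _.
apply: le_measure; rewrite ?inE; try exact: mball.
by apply: le_ball; rewrite ltW // (le_lt_trans (ler_norm _) Ne).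
Qed.

End invariant_measure.

Theorem lemma17 (R : realType) (mu : probability R R) :
  mu `[0%R, 2^-1%R]%classic = 1%E ->
  M_invariant mu ->
  msupport mu = `[0%R, 2^-1%R]%classic.
Proof.
move=> muI mu_inv; apply/seteqP; split; last exact: itv_sub_msupport.
exact: msupport_sub_closed (@itv_closed _ R _ _) (measurable_itv _) muI.
Qed.
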